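(* Let $T$ be a countably infinite graph. Then every countably infinite, infinitely connected graph $H$ contains a spanning subgraph isomorphic to $T$ if and only if $T$ is a forest and either (i) some component of $T$ has unbounded radius, or (ii) $T$ has infinitely many components.
   Context: A graph $H$ is infinitely connected if it is infinite and $H-F$ is connected for every finite $F\subseteq V(H)$. A connected graph has radius at most $k$ if there is a vertex $u$ such that every vertex is joined to $u$ by a path of length at most $k$; it has unbounded radius if no such $k$ exists. A spanning subgraph of $H$ is a subgraph with vertex set $V(H)$. *)

From Stdlib Require Import List.
Import ListNotations.

Record graph := mkGraph {
  V :> Type;
  adj : V -> V -> Prop;
  adj_sym : forall x y, adj x y -> adj y x;
  adj_irrefl : forall x, ~ adj x x
}.

Definition finite_set {A : Type} (P : A -> Prop) : Prop :=
  exists l : list A, forall x, P x -> In x l.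

Definition infinite_graph (G : graph) : Prop :=
  ~ finite_set (fun _ : V G => True).

Definition countably_infinite (G : graph) : Prop :=
  exists (f : V G -> nat) (g : nat -> V G),
    (forall x, g (f x) = x) /\ (forall n, f (g n) = n).

Fixpoint walk (G : graph) (x : V G) (l : list (V G)) : Prop :=
  match l with
  | [] => True
  | y :: l' => adj G x y /\ walk G y l'
  end.

(** A path from u to v with vertex sequence u :: l (distinct vertices);
    its length (number of edges) is [length l]. *)
Definition is_path (G : graph) (u v : V G) (l : list (V G)) : Prop :=
  walk G u l /\ last l u = v /\ NoDup (u :: l).

Definition joined (G : graph) (u v : V G) : Prop :=
  exists l, is_path G u v l.

Definition joined_within (G : graph) (k : nat) (u v : V G) : Prop :=
  exists l, is_path G u v l /\ length l <= k.

Definition connected (G : graph) : Prop :=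
  forall u v : V G, joined G u v.

Definition radius_le (G : graph) (k : nat) : Prop :=
  exists u : V G, forall v : V G, joined_within G k u v.

Definition unbounded_radius (G : graph) : Prop :=
  forall k, ~ radius_le G k.

Definition has_cycle (G : graph) : Prop :=
  exists (v0 : V G) (l : list (V G)),
    2 <= length l /\ walk G v0 l /\ NoDup (v0 :: l) /\ adj G (last l v0) v0.

Definition forest (G : graph) : Prop := ~ has_cycle G.

Definition induced (G : graph) (P : V G -> Prop) : graph.
Proof.
  refine (@mkGraph {x : V G | P x} (fun x y => adj G (proj1_sig x) (proj1_sig y)) _ _).
  - intros x y H; exact (adj_sym G _ _ H).
  - intros x; exact (adj_irrefl G _).
Defined.

Definition component (G : graph) (x : V G) : graph :=
  induced G (fun y => joined G x y).

Definition some_component_unbounded_radius (G : graph) : Prop :=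
  exists x : V G, unbounded_radius (component G x).

(** Infinitely many components: infinitely many pairwise non-joined vertices. *)
Definition infinitely_many_components (G : graph) : Prop :=
  exists f : nat -> V G, forall i j, i <> j -> ~ joined G (f i) (f j).

Definition delete (G : graph) (F : V G -> Prop) : graph :=
  induced G (fun x => ~ F x).

Definition infinitely_connected (H : graph) : Prop :=
  infinite_graph H /\
  forall F : V H -> Prop, finite_set F -> connected (delete H F).

Definition isomorphic (G1 G2 : graph) : Prop :=
  exists (f : V G1 -> V G2) (g : V G2 -> V G1),
    (forall x, g (f x) = x) /\ (forall y, f (g y) = y) /\
    (forall x y, adj G1 x y <-> adj G2 (f x) (f y)).

Record spanning_subgraph (H : graph) := {
  sadj : V H -> V H -> Prop;
  sadj_sym : forall x y, sadj x y -> sadj y x;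
  sadj_irrefl : forall x, ~ sadj x x;
  sadj_sub : forall x y, sadj x y -> adj H x y
}.

Definition sub_graph (H : graph) (S : spanning_subgraph H) : graph :=
  @mkGraph (V H) (sadj H S) (sadj_sym H S) (sadj_irrefl H S).

Definition has_spanning_copy (H T : graph) : Prop :=
  exists S : spanning_subgraph H, isomorphic T (sub_graph H S).

(** Sufficiency is a back-and-forth construction.  We maintain a finite
    partial embedding of [T] into [H] whose domain meets every component of
    [T] in a connected set; since [T] is a forest, a vertex outside the
    domain has at most one neighbour inside it.  Going forth, a new vertex is
    mapped to a fresh vertex of [H] (new component) or to a fresh neighbour
    of the image of its unique mapped neighbour (infinite connectivity
    provides both).  Going back, a vertex [h] of [H] is covered either by
    starting a fresh component of [T] at [h] (infinitely many components),
    or by following in [T] a path leaving the domain that is longer than any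
    path in [H] from the image to [h] avoiding the image, and mapping the two
    paths onto each other (unbounded radius).  Interleaving both steps along
    enumerations of [T] and [H] yields a bijection preserving edges.

    Necessity uses two test graphs on [nat]: a "levelled" graph whose edges
    join consecutive levels (a copy of [T] with finitely many components of
    bounded radius would only reach finitely many levels), and, for each
    [L], a graph joining every pair of vertices by infinitely many internally
    disjoint paths of length [L], all of whose cycles have length at least
    [L] (so it contains no spanning copy of a graph with a short cycle). *)

From Stdlib Require Import List Lia Arith Classical ClassicalEpsilon ProofIrrelevance FinFun.
From Stdlib Require Cantor.
Import ListNotations.

Lemma last_cons (A : Type) (a d : A) (l : list A) : last (a :: l) d = last l a.
Proof.
  revert a d; induction l as [|b l IH]; intros a d; auto.
  change (last (b :: l) d = last (b :: l) a). now rewrite !IH.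
Qed.

Lemma last_app (A : Type) (l1 l2 : list A) (x : A) :
  last (l1 ++ l2) x = last l2 (last l1 x).
Proof.
  revert x; induction l1 as [|a l1 IH]; intros x; auto.
  change (last (a :: (l1 ++ l2)) x = last l2 (last (a :: l1) x)).
  rewrite !last_cons. apply IH.
Qed.

Lemma last_map (A B : Type) (f : A -> B) (l : list A) (x : A) :
  last (map f l) (f x) = f (last l x).
Proof.
  revert x; induction l as [|a l IH]; intros x; auto.
  change (last (f a :: map f l) (f x) = f (last (a :: l) x)).
  rewrite !last_cons. apply IH.
Qed.

Lemma last_in_cons (A : Type) (l : list A) (d : A) : In (last l d) (d :: l).
Proof.
  revert d; induction l as [|a l IH]; intros d; [now left|].
  rewrite last_cons. right. apply IH.
Qed.

Lemma last_in (A : Type) (l : list A) (d : A) : l <> [] -> In (last l d) l.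
Proof.
  destruct l as [|a l]; intros Hne; [congruence|].
  rewrite last_cons. apply last_in_cons.
Qed.

Lemma NoDup_app_disjoint (A : Type) (l1 l2 : list A) (x : A) :
  NoDup (l1 ++ l2) -> In x l1 -> In x l2 -> False.
Proof.
  induction l1 as [|a l1 IH]; simpl; intros N H1 H2; auto.
  inversion N as [|? ? Na N']; subst. destruct H1 as [<-|H1]; eauto.
  apply Na, in_or_app; auto.
Qed.

Lemma split_at_last (A : Type) (Q : A -> Prop) (l : list A) :
  (exists a d b, l = a ++ d :: b /\ Q d /\ forall z, In z b -> ~ Q z) \/
  (forall z, In z l -> ~ Q z).
Proof.
  induction l as [|z l IH] using rev_ind.
  - right; intros z [].
  - destruct (classic (Q z)) as [Qz|Qz].
    + left. exists l, z, []. split; [reflexivity|split; [exact Qz|intros ? []]].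
    + destruct IH as [(a & d & b & E & Qd & Hb)|Hall].
      * left. exists a, d, (b ++ [z]). split; [subst; now rewrite <- app_assoc|].
        split; auto. intros w Hw. apply in_app_iff in Hw. destruct Hw as [Hw|[<-|[]]]; auto.
      * right. intros w Hw. apply in_app_iff in Hw. destruct Hw as [Hw|[<-|[]]]; auto.
Qed.

Lemma le_list_max (l : list nat) (x : nat) : In x l -> x <= list_max l.
Proof.
  intros Hx. assert (Hf : Forall (fun k => k <= list_max l) l) by now apply list_max_le.
  rewrite Forall_forall in Hf. auto.
Qed.

Lemma list_max_in (l : list nat) : l <> [] -> In (list_max l) l.
Proof.
  induction l as [|a l IH]; intros Hne; [congruence|].
  simpl. destruct l as [|b l]; [simpl; left; lia|].
  destruct (Nat.max_spec a (list_max (b :: l))) as [[_ ->]|[_ ->]]; auto.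
  right; apply IH; congruence.
Qed.

Lemma nat_not_finite : ~ finite_set (fun _ : nat => True).
Proof.
  intros [l Hl]. specialize (Hl (S (list_max l)) I). apply le_list_max in Hl. lia.
Qed.

Lemma uniform_bound (A : Type) (Q : A -> nat -> Prop) (l : list A) :
  (forall a, In a l -> exists n, Q a n) -> (forall a n m, Q a n -> n <= m -> Q a m) ->
  exists B, forall a, In a l -> Q a B.
Proof.
  intros Hl Hm. induction l as [|a l IH].
  - exists 0; intros a [].
  - destruct IH as [B HB]; [intros b Hb; apply Hl; simpl; auto|].
    destruct (Hl a (or_introl eq_refl)) as [n Hn].
    exists (Nat.max B n). intros b [<-|Hb]; [apply Hm with n|apply Hm with B]; auto; lia.
Qed.

Section Reach.
Variable G : graph.

Inductive reach (P : V G -> Prop) (x : V G) : V G -> Prop :=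
| reach_refl : P x -> reach P x x
| reach_step : forall y z, reach P x y -> adj G y z -> P z -> reach P x z.

Definition everywhere (_ : V G) : Prop := True.

Lemma reach_ends P x y : reach P x y -> P x /\ P y.
Proof. induction 1; tauto. Qed.

Lemma reach_trans P x y z : reach P x y -> reach P y z -> reach P x z.
Proof. intros H1 H2; induction H2; auto. econstructor; eauto. Qed.

Lemma reach_edge P x y : P x -> P y -> adj G x y -> reach P x y.
Proof. intros; econstructor; eauto. now constructor. Qed.

Lemma reach_cons P x y z : P x -> adj G x y -> reach P y z -> reach P x z.
Proof.
  intros Px A R. apply reach_trans with y; auto.
  apply reach_edge; auto. apply (reach_ends _ _ _ R).
Qed.

Lemma reach_sym P x y : reach P x y -> reach P y x.
Proof.
  induction 1 as [|y z R IH A Pz]; [now constructor|].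
  apply reach_cons with y; auto. apply adj_sym; auto.
Qed.

Lemma reach_mono (P Q : V G -> Prop) x y :
  (forall z, P z -> Q z) -> reach P x y -> reach Q x y.
Proof. intros HPQ; induction 1; [constructor|econstructor]; eauto. Qed.

Lemma walk_app x l1 l2 :
  walk G x (l1 ++ l2) <-> walk G x l1 /\ walk G (last l1 x) l2.
Proof.
  revert x; induction l1 as [|a l1 IH]; intros x; [simpl; tauto|].
  cbn [app walk]. rewrite IH, last_cons. tauto.
Qed.

Lemma walk_reach P x l :
  walk G x l -> (forall z, In z (x :: l) -> P z) -> reach P x (last l x).
Proof.
  revert x; induction l as [|a l IH]; intros x Hw HP.
  - constructor. apply HP; simpl; auto.
  - rewrite last_cons. destruct Hw as [A Hw].
    apply reach_cons with a; [apply HP; simpl; auto|auto|].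
    apply IH; auto. intros z Hz; apply HP; simpl in *; tauto.
Qed.

Lemma walk_member_reach x l z : walk G x l -> In z l -> reach everywhere x z.
Proof.
  intros W Hz. destruct (in_split _ _ Hz) as (p & s & ->).
  rewrite walk_app in W. destruct W as [W1 [A _]].
  apply reach_step with (last p x); [apply walk_reach|..]; easy.
Qed.

Lemma reach_walk P x y : reach P x y ->
  exists l, walk G x l /\ last l x = y /\ (forall z, In z (x :: l) -> P z).
Proof.
  induction 1 as [Px|y z R IH A Pz].
  - exists []; repeat split; auto. intros z [<-|[]]; auto.
  - destruct IH as (l & Hw & Hl & HP). exists (l ++ [z]).
    rewrite walk_app, last_app. subst y. repeat split; auto.
    intros w Hw'. simpl in Hw'. rewrite in_app_iff in Hw'.
    destruct Hw' as [<-|[Hw'|[<-|[]]]]; auto; apply HP; simpl; auto.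
Qed.

Lemma walk_shorten x l : walk G x l -> exists l',
  walk G x l' /\ last l' x = last l x /\ NoDup (x :: l') /\
  length l' <= length l /\ incl l' l.
Proof.
  revert x; induction l as [|y l IH]; intros x Hw.
  - exists []; repeat split; auto. { repeat constructor. intros []. } intros z [].
  - destruct Hw as [Hxy Hw].
    destruct (IH y Hw) as (l' & Hw' & Hl' & Hnd & Hlen & Hinc).
    destruct (classic (In x (y :: l'))) as [Hin|Hin].
    + destruct (in_split _ _ Hin) as (a & b & Hab).
      assert (Hwb : walk G x (y :: l')) by (simpl; auto).
      rewrite Hab, walk_app in Hwb. destruct Hwb as [_ [_ Hwb]].
      exists b. split; [exact Hwb|split; [|split; [|split]]].
      * rewrite last_cons, <- Hl', <- (last_cons _ y x l'), Hab, last_app, last_cons.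
        reflexivity.
      * rewrite Hab in Hnd. now apply NoDup_app_remove_l in Hnd.
      * assert (E : length (y :: l') = length (a ++ x :: b)) by now rewrite Hab.
        rewrite length_app in E; simpl in *; lia.
      * intros z Hz. assert (In z (y :: l')) by (rewrite Hab; apply in_or_app; simpl; auto).
        destruct H; simpl; auto.
    + exists (y :: l'). split; [|split; [|split; [|split]]].
      * simpl; auto.
      * now rewrite !last_cons.
      * now constructor.
      * simpl; lia.
      * intros z [<-|Hz]; simpl; auto.
Qed.

Lemma reach_path P x y : reach P x y ->
  exists l, is_path G x y l /\ (forall z, In z (x :: l) -> P z).
Proof.
  intros R. destruct (reach_walk _ _ _ R) as (l & Hw & Hl & HP).
  destruct (walk_shorten x l Hw) as (l' & Hw' & Hl' & Hnd & _ & Hinc).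
  exists l'. split; [split; [|split]; congruence|].
  intros z [<-|Hz]; apply HP; simpl; auto.
Qed.

Lemma reach_joined P x y : reach P x y -> joined G x y.
Proof. intros R; destruct (reach_path _ _ _ R) as (l & Hl & _). now exists l. Qed.

Lemma joined_reach x y : joined G x y -> reach everywhere x y.
Proof. intros (l & Hw & <- & _). now apply walk_reach. Qed.

Lemma joined_sym x y : joined G x y -> joined G y x.
Proof. intros J. apply (reach_joined everywhere). apply reach_sym, joined_reach, J. Qed.

End Reach.

Arguments everywhere {G} _.

Lemma everywhere_holds (G : graph) (x : V G) : everywhere x.
Proof. exact I. Qed.
#[export] Hint Resolve everywhere_holds : core.

Section Induced.
Variables (G : graph) (P : V G -> Prop).

Notation val := (@proj1_sig (V G) P).

Lemma val_inj (a b : V (induced G P)) : val a = val b -> a = b.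
Proof.
  destruct a as [a pa], b as [b pb]; simpl; intros ->.
  now rewrite (proof_irrelevance _ pa pb).
Qed.

Lemma reach_induced x y : reach G P x y -> forall px py,
  reach (induced G P) everywhere (exist _ x px) (exist _ y py).
Proof.
  induction 1 as [Px|y z R IH A Pz]; intros px py.
  - rewrite (proof_irrelevance _ px py). now constructor.
  - apply reach_step with (exist _ y (proj2 (reach_ends _ _ _ _ R))); easy.
Qed.

Lemma walk_val (a : V (induced G P)) l :
  walk (induced G P) a l -> walk G (val a) (map val l).
Proof. revert a; induction l; simpl; auto. intros b [H1 H2]; split; auto. Qed.

Lemma last_val (a : V (induced G P)) l : val (last l a) = last (map val l) (val a).
Proof. symmetry; apply last_map. Qed.

Lemma NoDup_val (l : list (V (induced G P))) : NoDup l -> NoDup (map val l).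
Proof. intros N. apply Injective_map_NoDup; auto. intros a b; apply val_inj. Qed.

Lemma walk_lift x l : walk G x l -> (forall z, In z l -> P z) -> forall px,
  exists l' : list (V (induced G P)),
    walk (induced G P) (exist _ x px) l' /\ map val l' = l.
Proof.
  revert x; induction l as [|y l IH]; intros x Hw HP px.
  - exists []; simpl; auto.
  - destruct Hw as [Hxy Hw]. assert (py : P y) by (apply HP; simpl; auto).
    destruct (IH y Hw (fun z Hz => HP z (or_intror Hz)) py) as (l' & Hw' & Hm).
    exists (exist _ y py :: l'). simpl. now rewrite Hm.
Qed.

Lemma induced_connected :
  (forall u v, P u -> P v -> reach G P u v) -> connected (induced G P).
Proof.
  intros Hr [u pu] [v pv]. apply (reach_joined _ everywhere).
  apply reach_induced, Hr; auto.
Qed.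

End Induced.

Lemma walk_map (G1 G2 : graph) (f : V G1 -> V G2) :
  (forall x y, adj G1 x y -> adj G2 (f x) (f y)) ->
  forall x l, walk G1 x l -> walk G2 (f x) (map f l).
Proof. intros Hf x l; revert x; induction l; simpl; auto. intros x [A W]; split; auto. Qed.

Section InfinitelyConnected.
Variable H : graph.
Hypothesis HI : infinitely_connected H.

Lemma fresh_vertex (l : list (V H)) : exists h, ~ In h l.
Proof.
  destruct HI as [Hinf _]. apply NNPP; intros Hn. apply Hinf. exists l.
  intros x _. apply NNPP; intros Hx. apply Hn; eauto.
Qed.

Lemma path_avoiding h0 h (l : list (V H)) : ~ In h l -> exists xs,
  is_path H h0 h xs /\ (forall x, In x xs -> ~ In x l).
Proof.
  intros Hh. destruct HI as [_ Hc].
  set (F := fun y => In y l /\ y <> h0).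
  assert (p0 : ~ F h0) by (intros [_ E]; auto).
  assert (p1 : ~ F h) by (intros [E _]; auto).
  destruct (Hc F (ex_intro _ l (fun x Fx => proj1 Fx)) (exist _ h0 p0) (exist _ h p1))
    as (l' & Hw & Hl & Hnd).
  apply NoDup_val in Hnd. simpl in Hnd.
  exists (map (@proj1_sig _ _) l'). split; [split; [|split]|].
  - exact (walk_val H _ _ l' Hw).
  - change h0 with (proj1_sig (exist (fun y => ~ F y) h0 p0)).
    rewrite <- last_val. exact (f_equal (@proj1_sig _ _) Hl).
  - exact Hnd.
  - intros x Hx Hxl. apply in_map_iff in Hx. destruct Hx as ([y py] & Hy & Hin).
    simpl in Hy. subst y. apply py. split; auto. intros ->.
    inversion Hnd as [|? ? Hn0 _]. apply Hn0. apply in_map_iff.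
    now exists (exist _ h0 py).
Qed.

Lemma fresh_neighbour h0 (l : list (V H)) : exists h, adj H h0 h /\ ~ In h l.
Proof.
  destruct (fresh_vertex (h0 :: l)) as [w Hw].
  destruct (path_avoiding h0 w l) as (xs & (Hwk & Hl & _) & Hx); [intros X; apply Hw; now right|].
  destruct xs as [|x1 xs]; [simpl in Hl; subst; now destruct Hw; left|].
  exists x1. destruct Hwk; split; auto. apply Hx; now left.
Qed.

End InfinitelyConnected.

(** ** Partial embeddings of a forest *)

Section PartialEmbeddings.
Variables T H : graph.
Hypothesis HF : forest T.
Hypothesis HI : infinitely_connected H.

Definition mapping := list (V T * V H).
Definition dom (m : mapping) (t : V T) : Prop := exists h, In (t, h) m.
Definition ran (m : mapping) (h : V H) : Prop := exists t, In (t, h) m.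

(** The invariant of the back-and-forth: an injective edge-preserving
    partial map whose domain meets each component of [T] in a connected
    set. *)
Record partial_embedding (m : mapping) : Prop := {
  pe_functional : forall t h h', In (t, h) m -> In (t, h') m -> h = h';
  pe_injective : forall t t' h, In (t, h) m -> In (t', h) m -> t = t';
  pe_hom : forall t h t' h', In (t, h) m -> In (t', h') m -> adj T t t' -> adj H h h';
  pe_convex : forall t t', dom m t -> dom m t' ->
    reach T everywhere t t' -> reach T (dom m) t t'
}.

Lemma partial_embedding_nil : partial_embedding [].
Proof. split; intros; simpl in *; try tauto. destruct H0 as [? []]. Qed.

Lemma ran_map m h : ran m h <-> In h (map snd m).
Proof.
  split; [intros [t Ht]; apply in_map_iff; now exists (t, h)|].
  intros Hm. apply in_map_iff in Hm. destruct Hm as ([t h'] & E & Hin).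
  simpl in E; subst. now exists t.
Qed.

Lemma dom_map m t : dom m t <-> In t (map fst m).
Proof.
  split; [intros [h Ht]; apply in_map_iff; now exists (t, h)|].
  intros Hm. apply in_map_iff in Hm. destruct Hm as ([t' h] & E & Hin).
  simpl in E; subst. now exists h.
Qed.

Lemma dom_incl m m' t : incl m m' -> dom m t -> dom m' t.
Proof. intros Hi [h Hh]. exists h; auto. Qed.

Lemma dom_cons m t h x : dom ((t, h) :: m) x <-> x = t \/ dom m x.
Proof.
  split.
  - intros [h' [E|Hin]]; [inversion E; auto|right; now exists h'].
  - intros [->|[h' Hh']]; [exists h; now left|exists h'; now right].
Qed.

(** In a forest, a vertex outside the domain of a partial embedding has at
    most one neighbour inside it: two would close a cycle through the
    domain. *)
Lemma unique_dom_neighbour m w d1 d2 : partial_embedding m -> ~ dom m w ->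
  adj T w d1 -> adj T w d2 -> dom m d1 -> dom m d2 -> d1 = d2.
Proof.
  intros Hm Hw A1 A2 D1 D2. apply NNPP; intros Hne.
  assert (R : reach T everywhere d1 d2).
  { apply reach_cons with w; [easy|apply adj_sym; auto|apply reach_edge; easy]. }
  apply (pe_convex _ Hm) in R; auto.
  destruct (reach_path _ _ _ _ R) as (q & (Wq & Lq & Nq) & Hq).
  apply HF. exists w, (d1 :: q). split; [|split; [|split]].
  - destruct q; [simpl in Lq; congruence|simpl; lia].
  - simpl; auto.
  - constructor; [intros Hin; apply Hw, Hq, Hin|exact Nq].
  - rewrite last_cons, Lq. apply adj_sym; auto.
Qed.

Lemma cons_functional m t h : partial_embedding m -> ~ dom m t ->
  forall t1 h1 h2, In (t1, h1) ((t, h) :: m) -> In (t1, h2) ((t, h) :: m) -> h1 = h2.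
Proof.
  intros Hm Ht t1 h1 h2 [E1|E1] [E2|E2]; try (inversion E1; inversion E2; congruence).
  - inversion E1; subst. destruct Ht; now exists h2.
  - inversion E2; subst. destruct Ht; now exists h1.
  - eapply pe_functional; eauto.
Qed.

Lemma cons_injective m t h : partial_embedding m -> ~ ran m h ->
  forall t1 t2 h1, In (t1, h1) ((t, h) :: m) -> In (t2, h1) ((t, h) :: m) -> t1 = t2.
Proof.
  intros Hm Hr t1 t2 h1 [E1|E1] [E2|E2]; try (inversion E1; inversion E2; congruence).
  - inversion E1; subst. destruct Hr; now exists t2.
  - inversion E2; subst. destruct Hr; now exists t1.
  - eapply pe_injective; eauto.
Qed.

Lemma extend_new_component m t h : partial_embedding m ->
  (forall d, dom m d -> ~ reach T everywhere t d) -> ~ ran m h ->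
  partial_embedding ((t, h) :: m).
Proof.
  intros Hm Hd Hr.
  assert (Ht : ~ dom m t) by (intros D; apply (Hd t D); now constructor).
  split.
  - now apply cons_functional.
  - now apply cons_injective.
  - intros t1 h1 t2 h2 [E1|E1] [E2|E2] A.
    + inversion E1; inversion E2; subst. exfalso; eapply adj_irrefl; eauto.
    + inversion E1; subst. exfalso. apply (Hd t2); [now exists h2|now apply reach_edge].
    + inversion E2; subst. exfalso. apply (Hd t1); [now exists h1|].
      apply reach_edge; auto. now apply adj_sym.
    + eapply pe_hom; eauto.
  - intros t1 t2 D1 D2 R. apply dom_cons in D1, D2.
    destruct D1 as [->|D1], D2 as [->|D2].
    + constructor. apply dom_cons; auto.
    + exfalso; apply (Hd t2 D2 R).
    + exfalso; apply (Hd t1 D1). now apply reach_sym.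
    + apply reach_mono with (dom m); [intros; apply dom_cons; auto|].
      now apply (pe_convex _ Hm).
Qed.

Lemma extend_leaf m t t' h' h : partial_embedding m -> ~ dom m t ->
  In (t', h') m -> adj T t' t -> ~ ran m h -> adj H h' h ->
  partial_embedding ((t, h) :: m).
Proof.
  intros Hm Ht Ht' At Hr Ah.
  assert (Dt' : dom m t') by now exists h'.
  assert (U : forall d, dom m d -> adj T t d -> d = t').
  { intros d Dd Ad. apply (unique_dom_neighbour m t); auto. now apply adj_sym. }
  assert (Lift : forall x y, reach T (dom m) x y -> reach T (dom ((t, h) :: m)) x y).
  { intros x y; apply reach_mono. intros; apply dom_cons; auto. }
  split.
  - now apply cons_functional.
  - now apply cons_injective.
  - intros t1 h1 t2 h2 [E1|E1] [E2|E2] A.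
    + inversion E1; inversion E2; subst. exfalso; eapply adj_irrefl; eauto.
    + inversion E1; subst. assert (t2 = t') by (apply U; [now exists h2|auto]). subst.
      rewrite (pe_functional _ Hm _ _ _ E2 Ht'). now apply adj_sym.
    + inversion E2; subst.
      assert (t1 = t') by (apply U; [now exists h1|now apply adj_sym]). subst.
      now rewrite (pe_functional _ Hm _ _ _ E1 Ht').
    + eapply pe_hom; eauto.
  - intros t1 t2 D1 D2 R. apply dom_cons in D1, D2.
    destruct D1 as [->|D1], D2 as [->|D2].
    + constructor. apply dom_cons; auto.
    + apply reach_cons with t'; [apply dom_cons; auto|now apply adj_sym|].
      apply Lift, (pe_convex _ Hm); auto.
      apply reach_trans with t; auto. now apply reach_edge.
    + apply reach_step with t'; [|exact At|apply dom_cons; auto].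
      apply Lift, (pe_convex _ Hm); auto.
      apply reach_trans with t; auto. apply reach_edge; auto. now apply adj_sym.
    + apply Lift, (pe_convex _ Hm); auto.
Qed.

Lemma forth m t : partial_embedding m ->
  exists m', partial_embedding m' /\ incl m m' /\ dom m' t.
Proof.
  intros Hm.
  destruct (classic (exists d, dom m d /\ reach T everywhere d t)) as [(d & Dd & R)|Hn].
  - induction R as [_|y z R IH A _].
    + exists m; split; [easy|split; [apply incl_refl|easy]].
    + destruct IH as (m1 & Hm1 & Inc1 & [h' Hy]).
      destruct (classic (dom m1 z)) as [Dz|Dz]; [now exists m1|].
      destruct (fresh_neighbour H HI h' (map snd m1)) as (h & Ah & Hh).
      exists ((z, h) :: m1). split; [|split].
      * apply extend_leaf with y h'; auto. now rewrite ran_map.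
      * intros p Hp; right; auto.
      * exists h; now left.
  - destruct (fresh_vertex H HI (map snd m)) as [h Hh].
    exists ((t, h) :: m). split; [|split].
    + apply extend_new_component; auto; [|now rewrite ran_map].
      intros d Dd R. apply Hn. exists d; split; auto. now apply reach_sym.
    + intros p Hp; right; auto.
    + exists h; now left.
Qed.

Lemma extend_along_path ts xs : forall t0 h0 m, partial_embedding m ->
  In (t0, h0) m -> length ts = length xs ->
  walk T t0 ts -> walk H h0 xs -> NoDup ts -> NoDup xs ->
  (forall t, In t ts -> ~ dom m t) -> (forall x, In x xs -> ~ ran m x) ->
  exists m', partial_embedding m' /\ incl m m' /\ In (last ts t0, last xs h0) m'.
Proof.
  revert xs; induction ts as [|t1 ts IH];
    intros xs t0 h0 m Hm Hin Hlen Wt Wx Nt Nx Dt Rx.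
  - destruct xs; simpl in Hlen; try lia. exists m; split; [easy|split; [apply incl_refl|easy]].
  - destruct xs as [|x1 xs]; simpl in Hlen; try lia.
    destruct Wt as [At Wt], Wx as [Ax Wx].
    inversion Nt; inversion Nx; subst.
    assert (Hm1 : partial_embedding ((t1, x1) :: m)).
    { apply extend_leaf with t0 h0; auto; [apply Dt|apply Rx]; now left. }
    destruct (IH xs t1 x1 ((t1, x1) :: m) Hm1 (or_introl eq_refl))
      as (m' & Hm' & Inc & Hl); auto.
    + intros t Ht D. apply dom_cons in D. destruct D as [->|D]; [easy|].
      apply (Dt t); [now right|easy].
    + intros x Hx [t' [E|E]]; [inversion E; subst; easy|].
      apply (Rx x); [now right|now exists t'].
    + exists m'. split; auto. split; [intros p Hp; apply Inc; now right|].
      now rewrite !last_cons.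
Qed.

(** Back, when [T] has infinitely many components: some component of [T]
    misses the finite domain, and its representative may go anywhere. *)
Lemma component_missing_domain (f : nat -> V T)
  (Hf : forall i j, i <> j -> ~ joined T (f i) (f j)) m :
  exists i, forall d, dom m d -> ~ reach T everywhere (f i) d.
Proof.
  apply NNPP; intros Hn.
  assert (Hc : forall i, exists d, dom m d /\ reach T everywhere (f i) d).
  { intros i; apply NNPP; intros Hni; apply Hn; exists i; intros d Dd R; apply Hni; eauto. }
  destruct (choice _ Hc) as [rep Hrep].
  assert (Inj : Injective rep).
  { intros i j E. apply NNPP; intros Hne. apply (Hf i j Hne).
    apply (reach_joined _ everywhere). apply reach_trans with (rep i); [apply Hrep|].
    rewrite E. apply reach_sym, Hrep. }
  assert (Hle := @NoDup_incl_length _ (map rep (seq 0 (S (length m)))) (map fst m)).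
  rewrite length_map, length_seq, length_map in Hle.
  enough (S (length m) <= length m) by lia.
  apply Hle; [apply Injective_map_NoDup; auto; apply seq_NoDup|].
  intros z Hz. apply in_map_iff in Hz. destruct Hz as (i & <- & _). apply dom_map, Hrep.
Qed.

Lemma back_many_components (f : nat -> V T)
  (Hf : forall i j, i <> j -> ~ joined T (f i) (f j)) m h :
  partial_embedding m -> exists m', partial_embedding m' /\ incl m m' /\ ran m' h.
Proof.
  intros Hm. destruct (classic (ran m h)) as [Hr|Hr].
  { exists m; split; [easy|split; [apply incl_refl|easy]]. }
  destruct (component_missing_domain f Hf m) as [i Hi].
  exists ((f i, h) :: m). split; [|split].
  - now apply extend_new_component.
  - intros p Hp; now right.
  - exists (f i); now left.
Qed.

Lemma far_vertex x0 d K : unbounded_radius (component T x0) -> joined T x0 d ->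
  exists v, reach T everywhere d v /\
    forall l, walk T d l -> last l d = v -> K < length l.
Proof.
  intros Hub pd.
  destruct (not_all_ex_not _ _
    (fun Hall => Hub K (ex_intro _ (exist _ d pd : V (component T x0)) Hall)))
    as [[v pv] Hv].
  exists v. split.
  { apply reach_trans with x0; [apply reach_sym|]; now apply joined_reach. }
  intros l W Ll. apply Nat.nle_gt; intros Short.
  destruct (walk_shorten _ _ _ W) as (l' & W' & L' & N' & Len' & _).
  rewrite Ll in L'.
  assert (InComp : forall z, In z l' -> joined T x0 z).
  { intros z Hz. apply (reach_joined _ everywhere). apply reach_trans with d.
    - now apply joined_reach.
    - now apply walk_member_reach with l'. }
  destruct (walk_lift T (fun y => joined T x0 y) d l' W' InComp pd) as (l3 & W3 & M3).
  apply Hv. exists l3. split; [split; [exact W3|split]|].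
  - apply val_inj. rewrite last_val, M3. exact L'.
  - apply (NoDup_map_inv (@proj1_sig _ _)). simpl. now rewrite M3.
  - assert (E : length (map (@proj1_sig _ _) l3) = length l') by now rewrite M3.
    rewrite length_map in E. eapply Nat.le_trans; [apply Nat.eq_le_incl; exact E|lia].
Qed.

Lemma long_exit m d0 v M : partial_embedding m -> dom m d0 ->
  reach T everywhere d0 v ->
  (forall l, walk T d0 l -> last l d0 = v -> M + length m < length l) ->
  exists d b, dom m d /\ walk T d b /\ NoDup (d :: b) /\
    (forall z, In z b -> ~ dom m z) /\ M < length b.
Proof.
  intros Hm D0 R Far.
  destruct (reach_path _ _ _ _ R) as (P & (WP & LP & NP) & _).
  destruct (split_at_last _ (dom m) (d0 :: P)) as [(a & d & b & E & Dd & Hb)|Hall].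
  2:{ exfalso; apply (Hall d0); [now left|easy]. }
  assert (Wb : walk T d b /\ last P d0 = last b d).
  { destruct a as [|a0 a'].
    - inversion E; subst; auto.
    - inversion E; subst. rewrite walk_app in WP. destruct WP as [_ [_ WP]].
      split; auto. now rewrite last_app, last_cons. }
  destruct Wb as [Wb Lb].
  assert (Nb : NoDup (d :: b)) by (rewrite E in NP; now apply NoDup_app_remove_l in NP).
  exists d, b. repeat split; auto.
  apply Nat.nle_gt; intros Short.
  assert (Rd : reach T (dom m) d0 d).
  { apply (pe_convex _ Hm); auto. apply reach_trans with v; auto.
    apply reach_sym. rewrite <- LP, Lb. now apply walk_reach. }
  destruct (reach_path _ _ _ _ Rd) as (q & (Wq & Lq & Nq) & Hq).
  assert (Lenq : length (d0 :: q) <= length m).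
  { rewrite <- (length_map fst m). apply NoDup_incl_length; auto.
    intros z Hz; apply dom_map; auto. }
  specialize (Far (q ++ b)). rewrite walk_app, last_app, Lq, <- Lb, length_app in Far.
  simpl in Lenq. specialize (Far (conj Wq Wb) LP). lia.
Qed.

(** Back, when the component of [x0] has unbounded radius: a vertex [h] of
    [H] is reached from the image of a mapped vertex of that component by a
    path avoiding the range; a long enough path of [T] leaving the domain is
    mapped onto it. *)
Lemma back_unbounded_component x0 (Hub : unbounded_radius (component T x0)) m h :
  partial_embedding m -> exists m', partial_embedding m' /\ incl m m' /\ ran m' h.
Proof.
  intros Hm. destruct (classic (ran m h)) as [Hr|Hr].
  { exists m; split; [easy|split; [apply incl_refl|easy]]. }
  destruct (classic (exists d, dom m d /\ reach T everywhere x0 d)) as [(d0 & D0 & R0)|Hn].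
  2:{ exists ((x0, h) :: m). split; [|split].
      - apply extend_new_component; eauto.
      - intros p Hp; now right.
      - exists x0; now left. }
  destruct (uniform_bound _ (fun (p : V T * V H) n => exists xs, is_path H (snd p) h xs /\
     (forall x, In x xs -> ~ In x (map snd m)) /\ length xs <= n) m) as [M HM].
  { intros p _. destruct (path_avoiding H HI (snd p) h (map snd m)) as (xs & Hxs & Avoid).
    - now rewrite <- ran_map.
    - now exists (length xs), xs. }
  { intros p n n' (xs & Hxs & Avoid & Len) Hle. exists xs; split; [exact Hxs|split; [exact Avoid|lia]]. }
  destruct (far_vertex x0 d0 (M + length m) Hub (reach_joined _ _ _ _ R0)) as (v & Rv & Far).
  destruct (long_exit m d0 v M Hm D0 Rv Far) as (d & b & [hd Hd] & Wb & Nb & Db & Lb).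
  destruct (HM _ Hd) as (xs & (Wx & Lx & Nx) & Rx & Lenx). simpl in *.
  set (ts := firstn (length xs) b).
  assert (Ebt : ts ++ skipn (length xs) b = b) by apply firstn_skipn.
  inversion Nb as [|? ? _ Nb']; inversion Nx as [|? ? _ Nx']; subst.
  destruct (extend_along_path ts xs d hd m Hm Hd) as (m' & Hm' & Inc & Hin).
  - unfold ts; apply firstn_length_le; lia.
  - rewrite <- Ebt, walk_app in Wb. tauto.
  - exact Wx.
  - rewrite <- Ebt in Nb'. now apply NoDup_app_remove_r in Nb'.
  - exact Nx'.
  - intros t Ht. apply Db. rewrite <- Ebt. now apply in_or_app; left.
  - intros x Hx. rewrite ran_map. now apply Rx.
  - exists m'. split; auto. split; auto. now exists (last ts d).
Qed.

End PartialEmbeddings.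

(** ** The limit of the back-and-forth *)

Section Limit.
Variables T H : graph.
Variables (enumT : nat -> V T) (enumH : nat -> V H).
Hypothesis enumT_onto : forall t, exists n, enumT n = t.
Hypothesis enumH_onto : forall h, exists n, enumH n = h.
Hypothesis forth_step : forall m t, partial_embedding T H m ->
  exists m', partial_embedding T H m' /\ incl m m' /\ dom T H m' t.
Hypothesis back_step : forall m h, partial_embedding T H m ->
  exists m', partial_embedding T H m' /\ incl m m' /\ ran T H m' h.

Definition embedding_stage := {m | partial_embedding T H m}.

Lemma round m n : partial_embedding T H m -> exists m', partial_embedding T H m' /\
  incl m m' /\ dom T H m' (enumT n) /\ ran T H m' (enumH n).
Proof.
  intros Hm. destruct (forth_step m (enumT n) Hm) as (m1 & Hm1 & Inc1 & D1).
  destruct (back_step m1 (enumH n) Hm1) as (m2 & Hm2 & Inc2 & R2).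
  exists m2. split; [easy|split; [now apply incl_tran with m1|]].
  split; [now apply (dom_incl T H m1)|easy].
Qed.

Definition next_stage (s : embedding_stage) (n : nat) : embedding_stage :=
  let e := constructive_indefinite_description _ (round (proj1_sig s) n (proj2_sig s)) in
  exist _ (proj1_sig e) (proj1 (proj2_sig e)).

Fixpoint stage (n : nat) : embedding_stage :=
  match n with
  | 0 => exist _ [] (partial_embedding_nil T H)
  | S n => next_stage (stage n) n
  end.

Notation st n := (proj1_sig (stage n)).

Lemma stage_step n : incl (st n) (st (S n)) /\
  dom T H (st (S n)) (enumT n) /\ ran T H (st (S n)) (enumH n).
Proof.
  simpl. unfold next_stage. simpl.
  destruct (constructive_indefinite_description _ _) as [m Hm]. apply Hm.
Qed.

Lemma stage_incl k n : k <= n -> incl (st k) (st n).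
Proof.
  induction 1; [apply incl_refl|]. apply incl_tran with (st m); auto. apply stage_step.
Qed.

Lemma stage_common n k p q : In p (st n) -> In q (st k) ->
  partial_embedding T H (st (n + k)) /\ In p (st (n + k)) /\ In q (st (n + k)).
Proof.
  intros Hp Hq. split; [apply (proj2_sig (stage _))|].
  split; [apply (stage_incl n)|apply (stage_incl k)]; auto; lia.
Qed.

Lemma stage_dom t : exists h n, In (t, h) (st n).
Proof.
  destruct (enumT_onto t) as [n <-]. destruct (proj1 (proj2 (stage_step n))) as [h Hh].
  eauto.
Qed.

Lemma stage_ran h : exists t n, In (t, h) (st n).
Proof.
  destruct (enumH_onto h) as [n <-]. destruct (proj2 (proj2 (stage_step n))) as [t Ht].
  eauto.
Qed.

Definition phi (t : V T) : V H := proj1_sig (constructive_indefinite_description _ (stage_dom t)).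
Definition psi (h : V H) : V T := proj1_sig (constructive_indefinite_description _ (stage_ran h)).

Lemma phi_spec t : exists n, In (t, phi t) (st n).
Proof. unfold phi. now destruct (constructive_indefinite_description _ _). Qed.

Lemma psi_spec h : exists n, In (psi h, h) (st n).
Proof. unfold psi. now destruct (constructive_indefinite_description _ _). Qed.

Lemma psi_phi t : psi (phi t) = t.
Proof.
  destruct (phi_spec t) as [n Hn], (psi_spec (phi t)) as [k Hk].
  destruct (stage_common _ _ _ _ Hn Hk) as (Hm & A & B).
  symmetry; eapply pe_injective; eauto.
Qed.

Lemma phi_psi h : phi (psi h) = h.
Proof.
  destruct (phi_spec (psi h)) as [n Hn], (psi_spec h) as [k Hk].
  destruct (stage_common _ _ _ _ Hn Hk) as (Hm & A & B).
  eapply pe_functional; eauto.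
Qed.

Lemma phi_hom x y : adj T x y -> adj H (phi x) (phi y).
Proof.
  destruct (phi_spec x) as [n Hn], (phi_spec y) as [k Hk].
  destruct (stage_common _ _ _ _ Hn Hk) as (Hm & A & B).
  eapply pe_hom; eauto.
Qed.

Definition image_subgraph : spanning_subgraph H.
Proof.
  refine (Build_spanning_subgraph H (fun x y => adj T (psi x) (psi y)) _ _ _).
  - intros x y A; now apply adj_sym.
  - intros x; apply adj_irrefl.
  - intros x y A. rewrite <- (phi_psi x), <- (phi_psi y). now apply phi_hom.
Defined.

Lemma limit_spanning_copy : has_spanning_copy H T.
Proof.
  exists image_subgraph, phi, psi. split; [|split].
  - apply psi_phi.
  - apply phi_psi.
  - intros x y. simpl. now rewrite !psi_phi.
Qed.

End Limit.

Theorem forest_spans (T H : graph) : countably_infinite T -> countably_infinite H ->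
  infinitely_connected H -> forest T ->
  some_component_unbounded_radius T \/ infinitely_many_components T ->
  has_spanning_copy H T.
Proof.
  intros (fT & gT & hT & _) (fH & gH & hH & _) HI HF Hc.
  apply (limit_spanning_copy T H gT gH).
  - intros t. now exists (fT t).
  - intros h. now exists (fH h).
  - intros m t Hm. now apply forth.
  - intros m h Hm. destruct Hc as [[x0 Hub]|[f Hf]].
    + now apply back_unbounded_component with x0.
    + now apply back_many_components with f.
Qed.

(** ** Necessity *)

Lemma spanning_copy_hom (H T : graph) : has_spanning_copy H T ->
  exists phi : V T -> V H, (forall x y, phi x = phi y -> x = y) /\
    (forall h, exists t, phi t = h) /\ (forall x y, adj T x y -> adj H (phi x) (phi y)).
Proof.
  intros (S & phi & psi & Hpp & Hpp' & Ha). exists phi. split; [|split].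
  - intros x y E. now rewrite <- (Hpp x), <- (Hpp y), E.
  - intros h. now exists (psi h).
  - intros x y A. apply (sadj_sub H S), Ha, A.
Qed.

(** A graph with finitely many components has a finite list of
    representatives: otherwise one picks new components forever. *)
Lemma component_representatives (T : graph) : ~ infinitely_many_components T ->
  exists reps : list (V T), forall t, exists s, In s reps /\ joined T s t.
Proof.
  intros Hn. apply NNPP; intros Hs.
  assert (Hc : forall S : list (V T), exists t, forall s, In s S -> ~ joined T s t).
  { intros S. apply NNPP; intros H2. apply Hs. exists S. intros t. apply NNPP; intros H3.
    apply H2. exists t. intros s Hs' J. apply H3; eauto. }
  destruct (choice _ Hc) as [pick Hp].
  set (g := fix g n := match n with 0 => [] | S n => g n ++ [pick (g n)] end).
  assert (Hg : forall i j, i < j -> In (pick (g i)) (g j)).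
  { intros i j; induction j; intros Hij; [lia|]. simpl. apply in_or_app.
    destruct (Nat.eq_dec i j) as [->|Hne]; [right; now left|left; apply IHj; lia]. }
  apply Hn. exists (fun n => pick (g n)). intros i j Hij.
  destruct (Nat.lt_total i j) as [Hl|[E|Hl]]; [| congruence |].
  - apply Hp, Hg; auto.
  - intros J. apply joined_sym in J. revert J. apply Hp, Hg; auto.
Qed.

Definition level (x : nat) : nat := fst (Cantor.of_nat x).

Lemma level_pair n k : level (Cantor.to_nat (n, k)) = n.
Proof. unfold level. now rewrite Cantor.cancel_of_to. Qed.

Definition level_graph : graph.
Proof.
  refine (@mkGraph nat (fun x y => level x = S (level y) \/ level y = S (level x)) _ _).
  - intros x y [E|E]; auto.
  - intros x [E|E]; lia.
Defined.

Lemma level_graph_countable : countably_infinite level_graph.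
Proof. now exists (fun x => x), (fun x => x). Qed.

(** Removing finitely many vertices leaves, on every level, vertices of
    arbitrarily large second coordinate; these connect everything. *)
Lemma level_graph_infinitely_connected : infinitely_connected level_graph.
Proof.
  split; [apply nat_not_finite|].
  intros F [lf Hlf]. apply induced_connected.
  set (z := fun n => Cantor.to_nat (n, S (list_max lf))).
  assert (Hz : forall n, ~ F (z n)).
  { intros n Fz. apply Hlf, le_list_max in Fz. unfold z in Fz.
    pose proof (Cantor.to_nat_non_decreasing n (S (list_max lf))). lia. }
  assert (Along : forall n k, reach level_graph (fun x => ~ F x) (z n) (z (n + k))).
  { intros n k. induction k; [rewrite Nat.add_0_r; now constructor|].
    apply reach_step with (z (n + k)); auto. simpl. unfold z; rewrite !level_pair. lia. }
  assert (Up : forall u k, ~ F u -> reach level_graph (fun x => ~ F x) u (z (S (level u) + k))).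
  { intros u k Fu. apply reach_cons with (z (S (level u))); auto.
    simpl. unfold z; rewrite !level_pair. auto. }
  intros u v Fu Fv. set (M := Nat.max (level u) (level v)).
  apply reach_trans with (z (S M)).
  - replace (S M) with (S (level u) + (M - level u)) by lia. now apply Up.
  - apply reach_sym. replace (S M) with (S (level v) + (M - level v)) by lia. now apply Up.
Qed.

Lemma level_walk x l : walk level_graph x l -> level (last l x) <= level x + length l.
Proof.
  revert x; induction l as [|a l IH]; intros x W; [simpl; lia|].
  destruct W as [A W]. rewrite last_cons. specialize (IH a W). simpl in *. lia.
Qed.

Lemma bounded_component_levels (T : graph) (phi : V T -> nat)
  (Hphi : forall x y, adj T x y -> adj level_graph (phi x) (phi y)) s k :
  radius_le (component T s) k -> exists n, forall t, joined T s t -> level (phi t) <= n.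
Proof.
  intros [u Hu]. exists (level (phi (proj1_sig u)) + k). intros t pt.
  destruct (Hu (exist _ t pt)) as (l & (W & Ll & _) & Len).
  assert (Lt : last (map (@proj1_sig _ _) l) (proj1_sig u) = t).
  { rewrite <- last_val. exact (f_equal (@proj1_sig _ _) Ll). }
  apply walk_val, (walk_map T level_graph phi Hphi), level_walk in W.
  rewrite last_map, Lt, !length_map in W.
  eapply Nat.le_trans; [exact W|]. apply Nat.add_le_mono_l; exact Len.
Qed.

(** Necessity of (i) or (ii): otherwise [T] would fit into finitely many
    levels of the levelled graph. *)
Lemma unbounded_or_infinitely_many (T : graph) :
  has_spanning_copy level_graph T ->
  some_component_unbounded_radius T \/ infinitely_many_components T.
Proof.
  intros Hcopy. apply NNPP; intros Hn.
  destruct (component_representatives T) as [reps Hreps]; [intros X; apply Hn; auto|].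
  destruct (spanning_copy_hom _ _ Hcopy) as (phi & _ & Honto & Hhom).
  destruct (uniform_bound _ (fun s n => forall t, joined T s t -> level (phi t) <= n) reps)
    as [B HB].
  - intros s _. destruct (classic (exists k, radius_le (component T s) k)) as [[k Hk]|Hk].
    + now apply bounded_component_levels with k.
    + exfalso. apply Hn. left. exists s. intros k R. apply Hk; eauto.
  - intros s n n' Q Hle t Jt. specialize (Q t Jt). lia.
  - destruct (Honto (Cantor.to_nat (S B, 0))) as [t Ht].
    destruct (Hreps t) as (s & Hs & J).
    specialize (HB s Hs t J). rewrite Ht, level_pair in HB. lia.
Qed.

Definition cycle_on (G : graph) (v0 : V G) (l : list (V G)) : Prop :=
  2 <= length l /\ walk G v0 l /\ NoDup (v0 :: l) /\ adj G (last l v0) v0.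

Lemma cycle_two_neighbours (G : graph) v0 l : cycle_on G v0 l ->
  forall y, In y (v0 :: l) -> exists a b,
    In a (v0 :: l) /\ In b (v0 :: l) /\ a <> b /\ adj G y a /\ adj G y b.
Proof.
  intros (Hlen & W & N & A) y Hy. destruct Hy as [<-|Hy].
  - destruct l as [|y1 l1]; [simpl in Hlen; lia|].
    destruct l1 as [|z l1]; [simpl in Hlen; lia|].
    exists y1, (last (z :: l1) y1). rewrite last_cons in A.
    split; [right; now left|split; [|split; [|split]]].
    + right. right. now apply last_in.
    + intros E. inversion N as [|? ? _ N1]. inversion N1 as [|? ? Nn _].
      apply Nn. rewrite E. now apply last_in.
    + now destruct W.
    + now apply adj_sym.
  - destruct (in_split _ _ Hy) as (p & s & ->).
    rewrite walk_app in W. destruct W as [Wp [Ay Ws]].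
    exists (last p v0), (match s with [] => v0 | y' :: _ => y' end).
    split; [|split; [|split; [|split]]].
    + destruct (last_in_cons _ p v0) as [E|Hi]; [rewrite <- E; now left|].
      right; apply in_or_app; auto.
    + destruct s as [|y' s]; [now left|]. right; apply in_or_app; simpl; auto.
    + destruct s as [|y' s].
      * destruct p as [|p0 p]; [simpl in Hlen; lia|].
        intros E. pose proof (last_in _ (p0 :: p) v0) as Hi. rewrite E in Hi.
        inversion N as [|? ? Nv _]. apply Nv.
        change (In v0 ((p0 :: p) ++ [y])). apply in_or_app. left; apply Hi; congruence.
      * intros E. apply (NoDup_app_disjoint _ (v0 :: p) (y :: y' :: s) (last p v0)).
        exact N. apply last_in_cons. rewrite E; simpl; auto.
    + now apply adj_sym.
    + destruct s as [|y' s]; [now rewrite last_app in A|now destruct Ws].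
Qed.

(** For [L >= 2], the graph on [nat] consisting of paths of length [L]: the
    [q]-th path joins the two Cantor coordinates of the first Cantor
    coordinate of [q] through [L - 1] new vertices numbered from
    [S q * L].  Every pair of vertices is joined by such paths of arbitrarily
    large index, and every cycle has length at least [L]. *)
Section LongPaths.
Variable L : nat.
Hypothesis HL : 2 <= L.

Definition path_start (q : nat) : nat := fst (Cantor.of_nat (fst (Cantor.of_nat q))).
Definition path_end (q : nat) : nat := snd (Cantor.of_nat (fst (Cantor.of_nat q))).

Lemma cantor_coords_le q : fst (Cantor.of_nat q) + snd (Cantor.of_nat q) <= q.
Proof.
  pose proof (Cantor.to_nat_non_decreasing (fst (Cantor.of_nat q)) (snd (Cantor.of_nat q))) as E.
  rewrite <- surjective_pairing, Cantor.cancel_to_of in E. lia.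
Qed.

Lemma path_ends_le q : path_start q <= q /\ path_end q <= q.
Proof.
  unfold path_start, path_end.
  pose proof (cantor_coords_le q). pose proof (cantor_coords_le (fst (Cantor.of_nat q))). lia.
Qed.

Definition path_vertex (q j : nat) : nat :=
  if j =? 0 then path_start q else if j =? L then path_end q else S q * L + (j - 1).

Lemma path_vertex_0 q : path_vertex q 0 = path_start q.
Proof. reflexivity. Qed.

Lemma path_vertex_L q : path_vertex q L = path_end q.
Proof.
  unfold path_vertex. replace (L =? 0) with false by (symmetry; apply Nat.eqb_neq; lia).
  now rewrite Nat.eqb_refl.
Qed.

Lemma path_vertex_inner q j : 1 <= j -> j < L -> path_vertex q j = S q * L + (j - 1).
Proof.
  intros. unfold path_vertex.
  replace (j =? 0) with false by (symmetry; apply Nat.eqb_neq; lia).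
  now replace (j =? L) with false by (symmetry; apply Nat.eqb_neq; lia).
Qed.

Lemma inner_above q : q < S q * L.
Proof. nia. Qed.

Lemma inner_unique q q' a b : S q * L + a = S q' * L + b -> a < L -> b < L ->
  q = q' /\ a = b.
Proof.
  intros E Ha Hb. destruct (Nat.lt_total q q') as [Hq|[Hq|Hq]].
  - exfalso. assert (S (S q) * L <= S q' * L) by (apply Nat.mul_le_mono_r; lia). nia.
  - subst; lia.
  - exfalso. assert (S (S q') * L <= S q * L) by (apply Nat.mul_le_mono_r; lia). nia.
Qed.

Definition path_edge (x y : nat) : Prop :=
  exists q j, j < L /\ x = path_vertex q j /\ y = path_vertex q (S j).

Lemma path_edge_irrefl x : ~ path_edge x x.
Proof.
  intros (q & j & Hj & -> & E).
  pose proof (path_ends_le q). pose proof (inner_above q).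
  destruct (Nat.eq_dec j 0) as [->|Hj0].
  - rewrite path_vertex_0, path_vertex_inner in E; lia.
  - destruct (Nat.eq_dec (S j) L) as [Hs|Hs].
    + rewrite Hs, path_vertex_L, path_vertex_inner in E; lia.
    + rewrite !path_vertex_inner in E; lia.
Qed.

Definition long_path_graph : graph.
Proof.
  refine (@mkGraph nat (fun x y => path_edge x y \/ path_edge y x) _ _).
  - intros x y [A|A]; auto.
  - intros x [A|A]; eapply path_edge_irrefl; eauto.
Defined.

Lemma long_path_graph_countable : countably_infinite long_path_graph.
Proof. now exists (fun x => x), (fun x => x). Qed.

(** Given [u], [v] and finitely many deleted vertices, the path of index
    [q = <<u, v>, N>] with [N] large joins [u] to [v] avoiding them. *)
Lemma long_path_graph_infinitely_connected : infinitely_connected long_path_graph.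
Proof.
  split; [apply nat_not_finite|].
  intros F [lf Hlf]. apply induced_connected. intros u v Fu Fv.
  set (N := S (list_max lf)).
  set (q := Cantor.to_nat (Cantor.to_nat (u, v), N)).
  assert (Huv : path_start q = u /\ path_end q = v).
  { unfold path_start, path_end, q.
    rewrite (Cantor.cancel_of_to (Cantor.to_nat (u, v), N)). cbn [fst].
    now rewrite (Cantor.cancel_of_to (u, v)). }
  destruct Huv as [Hu Hv].
  assert (Hq : N <= q).
  { unfold q. pose proof (Cantor.to_nat_non_decreasing (Cantor.to_nat (u, v)) N). lia. }
  assert (Kept : forall j, j <= L -> ~ F (path_vertex q j)).
  { intros j Hj. destruct (Nat.eq_dec j 0) as [->|H0]; [now rewrite path_vertex_0, Hu|].
    destruct (Nat.eq_dec j L) as [->|H1]; [now rewrite path_vertex_L, Hv|].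
    rewrite path_vertex_inner; try lia. intros Fz. apply Hlf, le_list_max in Fz.
    pose proof (inner_above q). unfold N in Hq. lia. }
  assert (Along : forall j, j <= L ->
    reach long_path_graph (fun x => ~ F x) (path_vertex q 0) (path_vertex q j)).
  { induction j; intros Hj; [constructor; apply Kept; lia|].
    apply reach_step with (path_vertex q j); [apply IHj; lia| |now apply Kept].
    left. exists q, j; split; auto; lia. }
  rewrite <- Hu, <- Hv, <- path_vertex_L. now apply Along.
Qed.

Lemma inner_neighbours q j z : 1 <= j -> j < L -> adj long_path_graph (path_vertex q j) z ->
  z = path_vertex q (j - 1) \/ z = path_vertex q (S j) \/ S (S q) * L <= z.
Proof.
  intros Hj1 HjL [(q' & j' & Hj' & E1 & E2)|(q' & j' & Hj' & E1 & E2)];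
    pose proof (path_ends_le q'); pose proof (inner_above q).
  - destruct (Nat.eq_dec j' 0) as [->|Hj0].
    + rewrite path_vertex_0, path_vertex_inner in E1 by lia.
      right; right. rewrite E2, path_vertex_inner by lia.
      assert (S (S q) * L <= S q' * L) by (apply Nat.mul_le_mono_r; lia). lia.
    + rewrite !path_vertex_inner in E1 by lia.
      destruct (inner_unique q q' (j - 1) (j' - 1)) as [<- Ej]; try lia.
      right; left. rewrite E2. f_equal. lia.
  - destruct (Nat.eq_dec (S j') L) as [Hs|Hs].
    + rewrite Hs, path_vertex_L, path_vertex_inner in E2 by lia.
      right; right. rewrite E1, path_vertex_inner by lia.
      assert (S (S q) * L <= S q' * L) by (apply Nat.mul_le_mono_r; lia). lia.
    + rewrite !path_vertex_inner in E2 by lia.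
      destruct (inner_unique q q' (j - 1) (S j' - 1)) as [<- Ej]; try lia.
      left. rewrite E1. f_equal. lia.
Qed.

Lemma inner_of_smaller_neighbour x y : adj long_path_graph x y -> y <= x ->
  exists q j, 1 <= j /\ j < L /\ x = path_vertex q j.
Proof.
  intros [(q & j & Hj & E1 & E2)|(q & j & Hj & E1 & E2)] Hyx;
    pose proof (path_ends_le q); pose proof (inner_above q).
  - destruct (Nat.eq_dec j 0) as [->|Hj0].
    + rewrite path_vertex_0 in E1. rewrite path_vertex_inner in E2; lia.
    + exists q, j; repeat split; auto; lia.
  - destruct (Nat.eq_dec (S j) L) as [Hs|Hs].
    + rewrite Hs, path_vertex_L in E2. rewrite path_vertex_inner in E1; lia.
    + exists q, (S j); repeat split; auto; lia.
Qed.

Lemma cycle_contains_path v0 l q j0 : cycle_on long_path_graph v0 l ->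
  (forall y, In y (v0 :: l) -> y < S (S q) * L) ->
  1 <= j0 -> j0 < L -> In (path_vertex q j0) (v0 :: l) ->
  forall j, j <= L -> In (path_vertex q j) (v0 :: l).
Proof.
  intros Hc Hbound Hj1 Hj2 Hin0.
  assert (Spread : forall j, 1 <= j -> j < L -> In (path_vertex q j) (v0 :: l) ->
    In (path_vertex q (j - 1)) (v0 :: l) /\ In (path_vertex q (S j)) (v0 :: l)).
  { intros j H1 H2 Hin.
    destruct (cycle_two_neighbours _ _ _ Hc _ Hin) as (a & b & Ia & Ib & Hab & A & B).
    destruct (inner_neighbours q j a H1 H2 A) as [Ea|[Ea|Ea]];
      [| |apply Hbound in Ia; lia];
    (destruct (inner_neighbours q j b H1 H2 B) as [Eb|[Eb|Eb]];
      [| |apply Hbound in Ib; lia]);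
    subst; try congruence; auto. }
  assert (Down : forall d, d <= j0 -> In (path_vertex q (j0 - d)) (v0 :: l)).
  { induction d; intros Hd; [now rewrite Nat.sub_0_r|].
    replace (j0 - S d) with (j0 - d - 1) by lia. apply Spread; try lia. apply IHd; lia. }
  assert (Up : forall d, j0 + d <= L -> In (path_vertex q (j0 + d)) (v0 :: l)).
  { induction d; intros Hd; [now rewrite Nat.add_0_r|].
    replace (j0 + S d) with (S (j0 + d)) by lia. apply Spread; try lia. apply IHd; lia. }
  intros j Hj. destruct (Nat.le_gt_cases j j0).
  - replace j with (j0 - (j0 - j)) by lia. apply Down; lia.
  - replace j with (j0 + (j - j0)) by lia. apply Up; lia.
Qed.

(** Every cycle has at least [L] vertices: its largest vertex is an inner
    vertex of some path, which the cycle must then contain entirely. *)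
Lemma long_cycles v0 l : cycle_on long_path_graph v0 l -> L <= S (length l).
Proof.
  intros Hc. set (c := v0 :: l).
  assert (Hmax : In (list_max c) c) by (apply list_max_in; unfold c; congruence).
  assert (Hle : forall y, In y c -> y <= list_max c) by (intros; now apply le_list_max).
  destruct (cycle_two_neighbours _ _ _ Hc _ Hmax) as (a & _ & Ha & _ & _ & Aa & _).
  destruct (inner_of_smaller_neighbour _ a Aa (Hle a Ha)) as (q & j0 & Hj1 & Hj2 & Emax).
  assert (Hall : forall j, j <= L -> In (path_vertex q j) c).
  { apply (cycle_contains_path v0 l q j0 Hc); auto; [|now rewrite <- Emax].
    intros y Hy. apply Hle in Hy. rewrite Emax, path_vertex_inner in Hy; nia. }
  set (lst := path_start q :: map (fun k => S q * L + k) (seq 0 (L - 1))).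
  assert (Hl : length lst = L) by (unfold lst; simpl; rewrite length_map, length_seq; lia).
  assert (Hnd : NoDup lst).
  { constructor.
    - intros Hi. apply in_map_iff in Hi. destruct Hi as (k & Ek & _).
      pose proof (path_ends_le q). pose proof (inner_above q). lia.
    - apply Injective_map_NoDup; [intros x y E; lia|apply seq_NoDup]. }
  assert (Hinc : incl lst c).
  { intros z [<-|Hz]; [rewrite <- path_vertex_0; apply Hall; lia|].
    apply in_map_iff in Hz. destruct Hz as (k & <- & Hk). apply in_seq in Hk.
    replace (S q * L + k) with (path_vertex q (S k))
      by (rewrite path_vertex_inner; try lia; f_equal; lia).
    apply Hall; lia. }
  pose proof (NoDup_incl_length Hnd Hinc) as Hc'. rewrite Hl in Hc'. exact Hc'.
Qed.

End LongPaths.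

(** Necessity of being a forest: a spanning copy of [T] in the long-path
    graph with [L] exceeding the length of a cycle of [T] would map that
    cycle onto a shorter cycle. *)
Lemma spanning_copy_forest (T : graph) :
  (forall L (HL : 2 <= L), has_spanning_copy (long_path_graph L HL) T) -> forest T.
Proof.
  intros Hall [v0 [l Hc]]. set (L := length l + 2).
  assert (HL : 2 <= L) by (unfold L; lia).
  destruct (spanning_copy_hom _ _ (Hall L HL)) as (phi & Hinj & _ & Hhom).
  enough (L <= S (length l)) by (unfold L in *; lia).
  destruct Hc as (Hlen & W & N & A).
  rewrite <- (length_map phi l). apply (long_cycles L HL (phi v0)).
  split; [|split; [|split]].
  - now rewrite length_map.
  - now apply walk_map.
  - change (NoDup (map phi (v0 :: l))). now apply Injective_map_NoDup.
  - rewrite last_map. now apply Hhom.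
Qed.

Theorem mainTheorem12 (T : graph) (hT : countably_infinite T) :
  (forall H : graph, countably_infinite H -> infinitely_connected H ->
     has_spanning_copy H T)
  <->
  (forest T /\
   (some_component_unbounded_radius T \/ infinitely_many_components T)).
Proof.
  split.
  - intros Hall. split.
    + apply spanning_copy_forest. intros L HL.
      apply Hall; [apply long_path_graph_countable|now apply long_path_graph_infinitely_connected].
    + apply unbounded_or_infinitely_many, Hall;
        [apply level_graph_countable|apply level_graph_infinitely_connected].
  - intros [HF Hc] H HH HI. now apply forest_spans.
Qed.
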